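(* Let $\mathcal T$ be an essentially small triangulated category and $\mathscr M$ the class of good metrics on $\mathcal T$, with $\sim$ the equivalence of metrics. Then $\mathscr M/\!\sim$, ordered by $\le$, is a lattice. For good metrics $\mathcal A=\{A_n\}_{n}$ and $\mathcal C=\{C_n\}_n$, the meet is $[\mathcal A]\wedge[\mathcal C]=[\{A_n\cap C_n\}_{n}]$ and the join is $[\mathcal A]\vee[\mathcal C]=[\{\overline{A_n\cup C_n}\}_n]$ (both well defined, i.e. independent of the representatives).
   Context: A good metric is a chain $B_1\supseteq B_2\supseteq\cdots$ of full subcategories of $\mathcal T$ each containing $0$, closed under extensions, with $\Sigma^{-1}B_{n+1}\cup B_{n+1}\cup\Sigma B_{n+1}\subseteq B_n$. $\{A_n\}\le\{C_n\}$ if for every $n$ there is $m$ with $A_m\subseteq C_n$; $\mathcal A\sim\mathcal C$ if $\mathcal A\le\mathcal C$ and $\mathcal C\le\mathcal A$. For a class $\mathcal X$, $\overline{\mathcal X}$ is the smallest full subcategory containing $\mathcal X$ and $0$ closed under extensions. *)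

From HB Require Import structures.
From mathcomp Require Import all_boot all_algebra.
Set Implicit Arguments. Unset Strict Implicit. Unset Printing Implicit Defensive.
Import GRing.Theory.
Local Open Scope ring_scope.

Record precat := PreCat {
  Obj :> Type;
  Hom : Obj -> Obj -> zmodType;
  comp : forall X Y Z : Obj, Hom Y Z -> Hom X Y -> Hom X Z;  (* comp g f = g o f *)
  idm : forall X : Obj, Hom X X
}.
Arguments Hom {p}.
Arguments comp {p X Y Z}.
Arguments idm {p}.

Definition is_iso (C : precat) (X Y : C) (f : Hom X Y) : Prop :=
  exists g : Hom Y X, comp g f = idm X /\ comp f g = idm Y.

Definition is_additive (C : precat) (z : C) : Prop :=
  (forall (X Y Z W : C) (h : Hom Z W) (g : Hom Y Z) (f : Hom X Y),
      comp h (comp g f) = comp (comp h g) f) /\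
  (forall (X Y : C) (f : Hom X Y), comp (idm Y) f = f) /\
  (forall (X Y : C) (f : Hom X Y), comp f (idm X) = f) /\
  (forall (X Y Z : C) (g1 g2 : Hom Y Z) (f : Hom X Y),
      comp (g1 + g2) f = comp g1 f + comp g2 f) /\
  (forall (X Y Z : C) (g : Hom Y Z) (f1 f2 : Hom X Y),
      comp g (f1 + f2) = comp g f1 + comp g f2) /\
  (forall (X : C) (f : Hom z X), f = 0) /\
  (forall (X : C) (f : Hom X z), f = 0) /\
  (forall X Y : C, exists (P : C) (i1 : Hom X P) (i2 : Hom Y P)
                          (p1 : Hom P X) (p2 : Hom P Y),
      [/\ comp p1 i1 = idm X, comp p2 i2 = idm Y, comp p1 i2 = 0,
          comp p2 i1 = 0 & comp i1 p1 + comp i2 p2 = idm P]).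

Record triang_data (C : precat) := TriangData {
  zero_obj : C;
  Sig : C -> C;
  Sigm : forall X Y : C, Hom X Y -> Hom (Sig X) (Sig Y);
  dist : forall X Y Z : C, Hom X Y -> Hom Y Z -> Hom Z (Sig X) -> Prop
}.
Arguments zero_obj {C}.
Arguments Sig {C}.
Arguments Sigm {C} t {X Y}.
Arguments dist {C} t {X Y Z}.

Definition is_triangulated (C : precat) (T : triang_data C) : Prop :=
  is_additive (zero_obj T) /\
  (forall X : C, Sigm T (idm X) = idm (Sig T X)) /\
  (forall (X Y Z : C) (g : Hom Y Z) (f : Hom X Y),
      Sigm T (comp g f) = comp (Sigm T g) (Sigm T f)) /\
  (forall (X Y : C) (f g : Hom X Y), Sigm T (f + g) = Sigm T f + Sigm T g) /\
  (forall (X Y : C) (g : Hom (Sig T X) (Sig T Y)), exists f : Hom X Y, Sigm T f = g) /\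
  (forall (X Y : C) (f g : Hom X Y), Sigm T f = Sigm T g -> f = g) /\
  (forall Y : C, exists (X : C) (f : Hom (Sig T X) Y), is_iso f) /\
  (forall (X Y Z X' Y' Z' : C) (u : Hom X Y) (v : Hom Y Z) (w : Hom Z (Sig T X))
          (u' : Hom X' Y') (v' : Hom Y' Z') (w' : Hom Z' (Sig T X'))
          (a : Hom X X') (b : Hom Y Y') (c : Hom Z Z'),
      is_iso a -> is_iso b -> is_iso c ->
      comp u' a = comp b u -> comp v' b = comp c v -> comp w' c = comp (Sigm T a) w ->
      dist T u v w -> dist T u' v' w') /\
  (forall X : C, dist T (idm X) (0 : Hom X (zero_obj T)) (0 : Hom (zero_obj T) (Sig T X))) /\
  (forall (X Y : C) (u : Hom X Y), exists (Z : C) (v : Hom Y Z) (w : Hom Z (Sig T X)),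
      dist T u v w) /\
  (forall (X Y Z : C) (u : Hom X Y) (v : Hom Y Z) (w : Hom Z (Sig T X)),
      dist T u v w <-> dist T v w (- Sigm T u)) /\
  (forall (X Y Z X' Y' Z' : C) (u : Hom X Y) (v : Hom Y Z) (w : Hom Z (Sig T X))
          (u' : Hom X' Y') (v' : Hom Y' Z') (w' : Hom Z' (Sig T X'))
          (a : Hom X X') (b : Hom Y Y'),
      dist T u v w -> dist T u' v' w' -> comp u' a = comp b u ->
      exists c : Hom Z Z', comp v' b = comp c v /\ comp w' c = comp (Sigm T a) w) /\
  (forall (X Y Z Z' X' Y' : C) (u : Hom X Y) (v : Hom Y Z)
          (j : Hom Y Z') (k : Hom Z' (Sig T X))
          (l : Hom Z X') (i : Hom X' (Sig T Y))
          (m : Hom Z Y') (n : Hom Y' (Sig T X)),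
      dist T u j k -> dist T v l i -> dist T (comp v u) m n ->
      exists (f : Hom Z' Y') (g : Hom Y' X'),
        [/\ dist T f g (comp (Sigm T j) i),
            comp f j = comp m v, comp n f = k,
            comp g m = l & comp i g = comp (Sigm T u) n]).

Section Metrics.
Variables (C : precat) (T : triang_data C).

(** A full subcategory is given by a predicate on objects. *)
Definition contains0 (B : C -> Prop) : Prop := B (zero_obj T).

Definition ext_closed (B : C -> Prop) : Prop :=
  forall (X Y Z : C) (u : Hom X Y) (v : Hom Y Z) (w : Hom Z (Sig T X)),
    dist T u v w -> B X -> B Z -> B Y.

Definition good_metric (B : nat -> C -> Prop) : Prop :=
  forall n : nat,
    [/\ contains0 (B n), ext_closed (B n),
        (forall X, B n.+1 X -> B n X),
        (forall X, B n.+1 X -> B n (Sig T X)) &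
        (forall X, B n.+1 (Sig T X) -> B n X)].

Definition metric_le (A E : nat -> C -> Prop) : Prop :=
  forall n : nat, exists m : nat, forall X, A m X -> E n X.

Definition metric_equiv (A E : nat -> C -> Prop) : Prop :=
  metric_le A E /\ metric_le E A.

Definition ext_closure (S : C -> Prop) : C -> Prop :=
  fun Y => forall B : C -> Prop,
    contains0 B -> ext_closed B -> (forall Z, S Z -> B Z) -> B Y.

Definition metric_meet (A E : nat -> C -> Prop) : nat -> C -> Prop :=
  fun n X => A n X /\ E n X.

Definition metric_join (A E : nat -> C -> Prop) : nat -> C -> Prop :=
  fun n => ext_closure (fun X => A n X \/ E n X).

End Metrics.

From Pilot Require Import Defs.
From mathcomp Require Import all_boot all_algebra.
Import Defs.
Set Implicit Arguments. Unset Strict Implicit. Unset Printing Implicit Defensive.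
Import GRing.Theory.
Local Open Scope ring_scope.

(* The levelwise intersection and the levelwise extension closure of the union
   are good metrics and are the greatest lower and least upper bounds for the
   preorder [metric_le]; well-definedness on classes then follows from these
   universal properties alone, since they make meet and join monotone.
   The one non-formal point is that the join is closed under desuspension.
   As [Sig] is an equivalence, a distinguished triangle whose vertices are
   isomorphic to suspensions is isomorphic to some [(- Sigm u0, - Sigm v0,
   - Sigm w0)], and three rotations show that [(u0, v0, w0)] is then
   distinguished; induction on the extension closure does the rest. *)

Section ExtensionClosure.
Variables (C : precat) (T : triang_data C).
Implicit Types S K : C -> Prop.

Lemma ext_closure0 S : contains0 T (ext_closure T S).
Proof. by move=> B B0. Qed.

Lemma ext_closure_closed S : ext_closed T (ext_closure T S).
Proof.
move=> X Y Z u v w D SX SZ B B0 Bext BS.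
exact: Bext _ _ _ _ _ _ D (SX B B0 Bext BS) (SZ B B0 Bext BS).
Qed.

Lemma sub_ext_closure S X : S X -> ext_closure T S X.
Proof. by move=> SX B _ _; apply. Qed.

Lemma ext_closure_min S K :
  contains0 T K -> ext_closed T K -> (forall X, S X -> K X) ->
  forall X, ext_closure T S X -> K X.
Proof. by move=> K0 Kext SK X; apply. Qed.

Lemma ext_closure_sub S S' :
  (forall X, S X -> S' X) -> forall X, ext_closure T S X -> ext_closure T S' X.
Proof.
move=> SS'; apply: ext_closure_min; [exact: ext_closure0 | exact: ext_closure_closed |].
by move=> X /SS' /sub_ext_closure.
Qed.

End ExtensionClosure.

Section Triangulated.
Variables (C : precat) (T : triang_data C).
Hypothesis HT : is_triangulated T.

Lemma comp_assoc (X Y Z W : C) (h : Hom Z W) (g : Hom Y Z) (f : Hom X Y) :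
  comp h (comp g f) = comp (comp h g) f.
Proof. by case: HT => [[? _] _]. Qed.

Lemma comp_idl (X Y : C) (f : Hom X Y) : comp (idm Y) f = f.
Proof. by case: HT => [[_ [? _]] _]. Qed.

Lemma comp_idr (X Y : C) (f : Hom X Y) : comp f (idm X) = f.
Proof. by case: HT => [[_ [_ [? _]]] _]. Qed.

Lemma comp_addl (X Y Z : C) (g1 g2 : Hom Y Z) (f : Hom X Y) :
  comp (g1 + g2) f = comp g1 f + comp g2 f.
Proof. by case: HT => [[_ [_ [_ [? _]]]] _]. Qed.

Lemma comp_addr (X Y Z : C) (g : Hom Y Z) (f1 f2 : Hom X Y) :
  comp g (f1 + f2) = comp g f1 + comp g f2.
Proof. by case: HT => [[_ [_ [_ [_ [? _]]]]] _]. Qed.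

Lemma hom_from_zero (X : C) (f : Hom (zero_obj T) X) : f = 0.
Proof. by case: HT => [[_ [_ [_ [_ [_ [? _]]]]]] _]. Qed.

Lemma hom_to_zero (X : C) (f : Hom X (zero_obj T)) : f = 0.
Proof. by case: HT => [[_ [_ [_ [_ [_ [_ [? _]]]]]]] _]. Qed.

Lemma Sigm_id (X : C) : Sigm T (idm X) = idm (Sig T X).
Proof. by case: HT => [_ [? _]]. Qed.

Lemma Sigm_add (X Y : C) (f g : Hom X Y) : Sigm T (f + g) = Sigm T f + Sigm T g.
Proof. by case: HT => [_ [_ [_ [? _]]]]. Qed.

Lemma Sigm_full (X Y : C) (g : Hom (Sig T X) (Sig T Y)) :
  exists f : Hom X Y, Sigm T f = g.
Proof. by case: HT => [_ [_ [_ [_ [? _]]]]]. Qed.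

Lemma Sigm_inj (X Y : C) (f g : Hom X Y) : Sigm T f = Sigm T g -> f = g.
Proof. by case: HT => [_ [_ [_ [_ [_ [inj _]]]]]]; apply: inj. Qed.

Lemma Sig_ess_surj (Y : C) : exists (X : C) (f : Hom (Sig T X) Y), is_iso f.
Proof. by case: HT => [_ [_ [_ [_ [_ [_ [? _]]]]]]]. Qed.

Lemma dist_iso (X Y Z X' Y' Z' : C)
    (u : Hom X Y) (v : Hom Y Z) (w : Hom Z (Sig T X))
    (u' : Hom X' Y') (v' : Hom Y' Z') (w' : Hom Z' (Sig T X'))
    (a : Hom X X') (b : Hom Y Y') (c : Hom Z Z') :
  is_iso a -> is_iso b -> is_iso c ->
  comp u' a = comp b u -> comp v' b = comp c v -> comp w' c = comp (Sigm T a) w ->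
  dist T u v w -> dist T u' v' w'.
Proof. by case: HT => [_ [_ [_ [_ [_ [_ [_ [iso _]]]]]]]]; apply: iso. Qed.

Lemma dist_id (X : C) :
  dist T (idm X) (0 : Hom X (zero_obj T)) (0 : Hom (zero_obj T) (Sig T X)).
Proof. by case: HT => [_ [_ [_ [_ [_ [_ [_ [_ [? _]]]]]]]]]. Qed.

Lemma dist_rot (X Y Z : C) (u : Hom X Y) (v : Hom Y Z) (w : Hom Z (Sig T X)) :
  dist T u v w <-> dist T v w (- Sigm T u).
Proof. by case: HT => [_ [_ [_ [_ [_ [_ [_ [_ [_ [_ [? _]]]]]]]]]]]. Qed.

Lemma dist_rot3 (X Y Z : C) (u : Hom X Y) (v : Hom Y Z) (w : Hom Z (Sig T X)) :
  dist T u v w <-> dist T (- Sigm T u) (- Sigm T v) (- Sigm T w).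
Proof.
exact: iff_trans (dist_rot _ _ _) (iff_trans (dist_rot _ _ _) (dist_rot _ _ _)).
Qed.

Lemma comp0l (X Y Z : C) (f : Hom X Y) : comp (0 : Hom Y Z) f = 0.
Proof. by apply: (addrI (comp 0 f)); rewrite -comp_addl !addr0. Qed.

Lemma comp0r (X Y Z : C) (g : Hom Y Z) : comp g (0 : Hom X Y) = 0.
Proof. by apply: (addrI (comp g 0)); rewrite -comp_addr !addr0. Qed.

Lemma Sigm0 (X Y : C) : Sigm T (0 : Hom X Y) = 0.
Proof. by apply: (addrI (Sigm T 0)); rewrite -Sigm_add !addr0. Qed.

Lemma is_iso_inv (X Y : C) (f : Hom X Y) :
  is_iso f -> exists2 g : Hom Y X, is_iso g & comp f g = idm Y.
Proof. by case=> g [gf fg]; exists g => //; exists f. Qed.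

Lemma iso_closed (K : C -> Prop) (X Y : C) (f : Hom X Y) :
  contains0 T K -> ext_closed T K -> is_iso f -> K X -> K Y.
Proof.
move=> K0 Kext isof KX.
have idm_iso (Z : C) : is_iso (idm Z) by exists (idm Z); rewrite comp_idl.
have D : dist T f (0 : Hom Y (zero_obj T)) (0 : Hom (zero_obj T) (Sig T X)).
  apply: dist_iso (idm_iso X) isof (idm_iso _) _ _ _ (dist_id X) => //.
  - by rewrite comp0l comp0r.
  - by rewrite comp0l comp0r.
exact: Kext _ _ _ _ _ _ D KX K0.
Qed.

Lemma mem_of_idm_eq0 (K : C -> Prop) (X : C) :
  contains0 T K -> ext_closed T K -> idm X = 0 -> K X.
Proof.
move=> K0 Kext idX0.
have iso0 : is_iso (0 : Hom (zero_obj T) X).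
  by exists 0; rewrite !comp0l idX0 (hom_from_zero (idm _)).
exact: (iso_closed K0 Kext iso0 K0).
Qed.

Lemma dist_desusp (X Y Z X' Y' Z' : C)
    (u : Hom X Y) (v : Hom Y Z) (w : Hom Z (Sig T X))
    (a : Hom (Sig T X') X) (b : Hom (Sig T Y') Y) (c : Hom (Sig T Z') Z) :
  is_iso a -> is_iso b -> is_iso c -> dist T u v w ->
  exists (u' : Hom X' Y') (v' : Hom Y' Z') (w' : Hom Z' (Sig T X')),
    dist T u' v' w'.
Proof.
move=> /is_iso_inv[a' isoa' aa'] /is_iso_inv[b' isob' bb'] /is_iso_inv[c' isoc' cc'] D.
have [u' Su'] := Sigm_full (- comp b' (comp u a)).
have [v' Sv'] := Sigm_full (- comp c' (comp v b)).
have [w' Sw'] := Sigm_full (- comp (Sigm T a') (comp w c)).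
exists u', v', w'; apply/dist_rot3.
apply: dist_iso isoa' isob' isoc' _ _ _ D.
- by rewrite Su' opprK -!comp_assoc aa' comp_idr.
- by rewrite Sv' opprK -!comp_assoc bb' comp_idr.
- by rewrite Sw' opprK -!comp_assoc cc' comp_idr.
Qed.

Lemma ext_closure_susp (S K : C -> Prop) :
  contains0 T K -> ext_closed T K -> (forall X, S X -> K (Sig T X)) ->
  forall X, ext_closure T S X -> K (Sig T X).
Proof.
move=> K0 Kext SK; apply: (@ext_closure_min _ T S (fun Y => K (Sig T Y))).
- apply: (mem_of_idm_eq0 K0 Kext).
  by rewrite -Sigm_id (hom_from_zero (idm _)) Sigm0.
- by move=> X1 Y Z u v w /dist_rot3 D; apply: Kext D.
- exact: SK.
Qed.

Lemma ext_closure_desusp (S K : C -> Prop) :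
  contains0 T K -> ext_closed T K ->
  (forall (X Y : C) (f : Hom (Sig T X) Y), is_iso f -> S Y -> K X) ->
  forall X, ext_closure T S (Sig T X) -> K X.
Proof.
move=> K0 Kext SK X SX.
(* Desuspensions are only defined up to isomorphism, so the induction must
   quantify over all of them. *)
pose P Y := forall (X' : C) (f : Hom (Sig T X') Y), is_iso f -> K X'.
suff PSX : P (Sig T X) by apply: (PSX X (idm _)); exists (idm _); rewrite comp_idl.
apply: (@ext_closure_min _ T S P _ _ _ _ SX).
- move=> X' f [g [gf _]]; apply: (mem_of_idm_eq0 K0 Kext).
  apply: Sigm_inj; rewrite Sigm_id Sigm0 -gf.
  by rewrite (hom_to_zero f) comp0r.
- move=> X1 Y Z u v w D KX1 KZ Y' b isob.
  have [X1' [a isoa]] := Sig_ess_surj X1.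
  have [Z' [c isoc]] := Sig_ess_surj Z.
  have [u' [v' [w' D']]] := dist_desusp isoa isob isoc D.
  exact: Kext D' (KX1 _ _ isoa) (KZ _ _ isoc).
- move=> Y SY X' f isof; exact: SK isof SY.
Qed.

End Triangulated.

Section MetricLattice.
Variables (C : precat) (T : triang_data C).
Implicit Types A D E : nat -> C -> Prop.

Lemma good_metric_antitone A (m n : nat) (X : C) :
  good_metric T A -> (m <= n)%N -> A n X -> A m X.
Proof.
move=> gA /subnKC <-; elim: (n - m)%N => [|k IHk]; first by rewrite addn0.
have [_ _ decr _ _] := gA (m + k)%N.
by rewrite addnS => /decr /IHk.
Qed.

Lemma metric_le_refl A : metric_le A A.
Proof. by move=> n; exists n. Qed.

Lemma metric_le_trans A D E : metric_le A D -> metric_le D E -> metric_le A E.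
Proof.
move=> AD DE n; have [m DEm] := DE n; have [k ADk] := AD m.
by exists k => X /ADk /DEm.
Qed.

Lemma good_metric_meet A E :
  good_metric T A -> good_metric T E -> good_metric T (metric_meet A E).
Proof.
move=> gA gE n.
have [A0 Aext Adecr AS ASi] := gA n; have [E0 Eext Edecr ES ESi] := gE n.
split; first by split.
- move=> X Y Z u v w D [AX EX] [AZ EZ].
  by split; [exact: Aext D AX AZ | exact: Eext D EX EZ].
- by move=> X [/Adecr AX /Edecr EX].
- by move=> X [/AS AX /ES EX].
- by move=> X [/ASi AX /ESi EX].
Qed.

Lemma metric_meet_le_l A E : metric_le (metric_meet A E) A.
Proof. by move=> n; exists n => X []. Qed.

Lemma metric_meet_le_r A E : metric_le (metric_meet A E) E.
Proof. by move=> n; exists n => X []. Qed.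

Lemma metric_le_meet A D E :
  good_metric T D -> metric_le D A -> metric_le D E -> metric_le D (metric_meet A E).
Proof.
move=> gD DA DE n; have [m1 DAm1] := DA n; have [m2 DEm2] := DE n.
exists (maxn m1 m2) => X DX; split.
- by apply: DAm1; apply: good_metric_antitone gD (leq_maxl _ _) DX.
- by apply: DEm2; apply: good_metric_antitone gD (leq_maxr _ _) DX.
Qed.

Hypothesis HT : is_triangulated T.

Lemma good_metric_join A E :
  good_metric T A -> good_metric T E -> good_metric T (metric_join T A E).
Proof.
move=> gA gE n.
have [_ _ Adecr AS ASi] := gA n; have [_ _ Edecr ES ESi] := gE n.
have [A0 Aext _ _ _] := gA n.+1; have [E0 Eext _ _ _] := gE n.+1.
split; [exact: ext_closure0 | exact: ext_closure_closed | | |].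
- by apply: ext_closure_sub => X [/Adecr|/Edecr]; [left|right].
- apply: (ext_closure_susp HT); [exact: ext_closure0 | exact: ext_closure_closed |].
  by move=> X [/AS|/ES] SX; apply: sub_ext_closure; [left|right].
- apply: (ext_closure_desusp HT); [exact: ext_closure0 | exact: ext_closure_closed |].
  move=> X Y f /is_iso_inv[g isog _] [AY|EY]; apply: sub_ext_closure.
  + by left; apply: ASi; exact: (iso_closed HT A0 Aext isog AY).
  + by right; apply: ESi; exact: (iso_closed HT E0 Eext isog EY).
Qed.

Lemma metric_le_join_l A E : metric_le A (metric_join T A E).
Proof. by move=> n; exists n => X AX; apply: sub_ext_closure; left. Qed.

Lemma metric_le_join_r A E : metric_le E (metric_join T A E).
Proof. by move=> n; exists n => X EX; apply: sub_ext_closure; right. Qed.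

Lemma metric_join_le A D E :
  good_metric T A -> good_metric T E -> good_metric T D ->
  metric_le A D -> metric_le E D -> metric_le (metric_join T A E) D.
Proof.
move=> gA gE gD AD ED n; have [m1 ADm1] := AD n; have [m2 EDm2] := ED n.
have [D0 Dext _ _ _] := gD n.
exists (maxn m1 m2); apply: ext_closure_min => // X [AX|EX].
- by apply: ADm1; apply: good_metric_antitone gA (leq_maxl _ _) AX.
- by apply: EDm2; apply: good_metric_antitone gE (leq_maxr _ _) EX.
Qed.

Lemma metric_meet_mono A A' E E' :
  good_metric T A -> good_metric T E -> metric_le A A' -> metric_le E E' ->
  metric_le (metric_meet A E) (metric_meet A' E').
Proof.
move=> gA gE AA' EE'; apply: metric_le_meet (good_metric_meet gA gE) _ _.
- exact: metric_le_trans (metric_meet_le_l A E) AA'.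
- exact: metric_le_trans (metric_meet_le_r A E) EE'.
Qed.

Lemma metric_join_mono A A' E E' :
  good_metric T A -> good_metric T A' -> good_metric T E -> good_metric T E' ->
  metric_le A A' -> metric_le E E' ->
  metric_le (metric_join T A E) (metric_join T A' E').
Proof.
move=> gA gA' gE gE' AA' EE'.
apply: metric_join_le gA gE (good_metric_join gA' gE') _ _.
- exact: metric_le_trans AA' (metric_le_join_l A' E').
- exact: metric_le_trans EE' (metric_le_join_r A' E').
Qed.

End MetricLattice.

Theorem proposition5p2 (C : precat) (T : triang_data C) (HT : is_triangulated T) :
  (* ≤ is a preorder on good metrics (so ∼-classes are partially ordered) *)
  (forall A, good_metric T A -> metric_le A A) /\
  (forall A B E, good_metric T A -> good_metric T B -> good_metric T E ->
     metric_le A B -> metric_le B E -> metric_le A E) /\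
  (* the meet *)
  (forall A E, good_metric T A -> good_metric T E ->
     [/\ good_metric T (metric_meet A E),
         metric_le (metric_meet A E) A, metric_le (metric_meet A E) E &
         forall D, good_metric T D -> metric_le D A -> metric_le D E ->
           metric_le D (metric_meet A E)]) /\
  (* the join *)
  (forall A E, good_metric T A -> good_metric T E ->
     [/\ good_metric T (metric_join T A E),
         metric_le A (metric_join T A E), metric_le E (metric_join T A E) &
         forall D, good_metric T D -> metric_le A D -> metric_le E D ->
           metric_le (metric_join T A E) D]) /\
  (* well-definedness on equivalence classes *)
  (forall A A' E E', good_metric T A -> good_metric T A' ->
     good_metric T E -> good_metric T E' ->
     metric_equiv A A' -> metric_equiv E E' ->
     metric_equiv (metric_meet A E) (metric_meet A' E') /\
     metric_equiv (metric_join T A E) (metric_join T A' E')).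
Proof.
split; [|split; [|split; [|split]]].
- by move=> A _; apply: metric_le_refl.
- by move=> A B E _ _ _; apply: metric_le_trans.
- move=> A E gA gE; split; [exact: good_metric_meet | exact: metric_meet_le_l |
    exact: metric_meet_le_r | by move=> D gD; apply: metric_le_meet].
- move=> A E gA gE; split; [exact: good_metric_join | exact: metric_le_join_l |
    exact: metric_le_join_r | by move=> D gD; apply: metric_join_le].
- move=> A A' E E' gA gA' gE gE' [AA' A'A] [EE' E'E]; split; split.
  + exact: metric_meet_mono.
  + exact: metric_meet_mono.
  + exact: metric_join_mono.
  + exact: metric_join_mono.
Qed.
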